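(* Assume the setting in the context. Then the iterates of A-SubSGDP satisfy, for all $t$, $$\mathbb{E}\big[\|w^t-w_*\|^2\big]\le\frac{4\eta^2M}{\mu^2(t+\eta)} .$$
   Context: Setting: $\mathcal Y$ finite; $\mathcal W\subseteq\mathbb{R}^D$ convex; $f_i:\mathcal Y\times\mathbb{R}^D\to\mathbb{R}$ ($i=1,\dots,n$) each convex in $w$, $r$ strongly convex, and each $g_i(w)=r(w)+\max_{y\in\mathcal Y}f_i(y,w)$ is $\mu$-strongly convex; subgradients of $r(w)+f_i(y,w)$ exist and $\sup\{\|v\|^2: v\in\partial[r(w)+f_i(y,w)],\ i,\ y\in\mathcal Y,\ w\in\mathcal W\}\le M$; there is $w_0\in\mathcal W$ with $g_i(w_0)=0$ for all $i$; each $f_i$ has a quantum oracle acting on $O(\mathrm{polylog}(1/\delta,|\mathcal Y|))$ qubits computing $f_i$ with additive error $\delta$. $f=\frac1n\sum_i g_i$ and $w_*=\arg\min_{w\in\mathcal W}f(w)$. Given $\eta\in\mathbb{N}^+$, set $\gamma_t=\frac{\eta}{\mu(t+\eta)}$ and $p_t=\frac1{4\sqrt{t+\eta}}$. A-SubSGDP: given $w^0\in\mathcal W$, an iteration count $T$ and $\eta$, at iteration $t$ choose an index $i$ uniformly at random from $\{1,\dots,n\}$ and compute an estimate $\hat y_i^t$ of a maximizer $\tilde y_i^t\in\arg\max_{y}f_i(y,w^t)$ that is correct with probability at least $1-p_t$; let $\widehat{\partial g_i(w^t)}$ be a subgradient of $w\mapsto r(w)+f_i(\hat y_i^t,w)$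 at $w^t$; set $w^{t+1}=\Pi_{\mathcal W}(w^t-\gamma_t\widehat{\partial g_i(w^t)})$ ($\Pi_{\mathcal W}$ Euclidean projection) and $\bar w_\eta^{t+1}=\frac{t}{t+\eta+1}\bar w_\eta^t+\frac{\eta+1}{t+\eta+1}w^{t+1}$; output $\bar w_\eta^T$. *)

From HB Require Import structures.
From mathcomp Require Import all_boot all_order all_algebra.
From mathcomp Require Import reals.
Set Implicit Arguments. Unset Strict Implicit. Unset Printing Implicit Defensive.
Import Order.TTheory GRing.Theory Num.Theory.
Local Open Scope ring_scope.

Section Defs.
Variables (R : realType) (D : nat).
Notation vec := 'rV[R]_D.

Definition dotv (u v : vec) : R := \sum_(j < D) u 0 j * v 0 j.
Definition sqnorm (u : vec) : R := dotv u u.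

Definition convex_set (W : vec -> Prop) : Prop :=
  forall x y (l : R), W x -> W y -> 0 <= l <= 1 -> W (l *: x + (1 - l) *: y).

Definition convex_fun (h : vec -> R) : Prop :=
  forall x y (l : R), 0 <= l <= 1 ->
    h (l *: x + (1 - l) *: y) <= l * h x + (1 - l) * h y.

Definition strongly_convex (mu : R) (h : vec -> R) : Prop :=
  forall x y (l : R), 0 <= l <= 1 ->
    h (l *: x + (1 - l) *: y) <=
      l * h x + (1 - l) * h y - mu / 2 * l * (1 - l) * sqnorm (x - y).

Definition is_subgrad (h : vec -> R) (w v : vec) : Prop :=
  forall z, h w + dotv v (z - w) <= h z.

Definition is_proj (W : vec -> Prop) (p : vec -> vec) : Prop :=
  forall x, W (p x) /\ forall z, W z -> sqnorm (x - p x) <= sqnorm (x - z).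

Definition fmax (Y : finType) (F : Y -> R) : R :=
  if [pick y : Y] is Some y0 then \big[Num.max/F y0]_(y : Y) F y else 0.

Definition gam (mu : R) (eta t : nat) : R := eta%:R / (mu * (t + eta)%:R).
Definition pfail (eta t : nat) : R := 1 / (4 * Num.sqrt (t + eta)%:R).

(* A history is a sequence of choices (i_s, yhat_s), NEWEST FIRST.
   sg h i y w is the subgradient of w |-> r w + f_i(y, w) used at w, given the
   past history h and the current choices i, y. *)
Fixpoint iterw (n : nat) (Y : finType) (proj : vec -> vec) (mu : R) (eta : nat)
   (sg : seq ('I_n * Y) -> 'I_n -> Y -> vec -> vec) (w0 : vec)
   (h : seq ('I_n * Y)) : vec :=
  match h with
  | [::] => w0
  | c :: h' =>
      let w := iterw proj mu eta sg w0 h' in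
      proj (w - gam mu eta (size h') *: sg h' c.1 c.2 w)
  end.

(* probability of a history: i uniform on 'I_n, then yhat drawn from the
   (history-dependent) distribution q h i of the maximizer estimator *)
Fixpoint histprob (n : nat) (Y : finType) (q : seq ('I_n * Y) -> 'I_n -> Y -> R)
   (h : seq ('I_n * Y)) : R :=
  match h with
  | [::] => 1
  | c :: h' => histprob q h' * (n%:R)^-1 * q h' c.1 c.2
  end.

End Defs.

From HB Require Import structures.
From mathcomp Require Import all_boot all_order all_algebra.
From mathcomp Require Import reals.
From mathcomp Require Import ring lra.
Import Order.TTheory GRing.Theory Num.Theory.
Local Open Scope ring_scope.
Set Implicit Arguments. Unset Strict Implicit.

(* Write d_t for the squared distance ||w^t - wstar||^2.  Projection onto W does not increase
   distances to wstar in W, so one step of the algorithm gives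
     d_{t+1} <= d_t + gamma_t^2 M - 2 gamma_t <v, w^t - wstar>.
   If the estimated maximizer is correct, v is a subgradient of g_i and strong convexity gives
   <v, w^t - wstar> >= g_i(w^t) - g_i(wstar) + mu/2 d_t.  If it is wrong (probability <= p_t),
   comparing v with a true subgradient by Young's inequality with weight
   b = eta / (mu sqrt(t + eta)) costs at most 2 b M + d_t / (2 b).  Averaging over i and using
   that wstar minimizes the (mu-strongly convex) mean of the g_i over W yields
     E d_{t+1} <= (1 - 2 eta/(t + eta) + 1/(4 (t + eta))) E d_t + 2 eta^2 M / (mu^2 (t + eta)^2),
   and this recurrence, started from d_0 <= 4 M / mu^2 (strong monotonicity of subgradients),
   propagates the bound 4 eta^2 M / (mu^2 (t + eta)) by induction on t. *)

Lemma ler_of_le_addM01 (R : realFieldType) (a b c : R) :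
  (forall l, 0 < l <= 1 -> a <= b + l * c) -> a <= b.
Proof.
move=> H; apply/ler_addgt0Pr => e e_gt0.
have [c_le0 | c_gt0] := lerP c 0.
  apply: le_trans (H 1 _) _; first by rewrite ltr01 lexx.
  by rewrite mul1r lerD2l (le_trans c_le0) ?ltW.
pose l := Num.min 1 (e / c).
have l01 : 0 < l <= 1 by rewrite ge_min lexx lt_min ltr01 divr_gt0.
apply: le_trans (H l l01) _; rewrite lerD2l -ler_pdivlMr //.
by rewrite ge_min lexx orbT.
Qed.

Section InnerProduct.
Variables (R : realType) (D : nat).
Implicit Types (u v x z : 'rV[R]_D) (a b : R).

Lemma dotvC u v : dotv u v = dotv v u.
Proof. by apply: eq_bigr => j _; rewrite mulrC. Qed.

Lemma dotvDl u v z : dotv (u + v) z = dotv u z + dotv v z.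
Proof. by rewrite /dotv -big_split; apply: eq_bigr => j _; rewrite mxE mulrDl. Qed.

Lemma dotvZl a u z : dotv (a *: u) z = a * dotv u z.
Proof. by rewrite /dotv mulr_sumr; apply: eq_bigr => j _; rewrite mxE mulrA. Qed.

Lemma dotvNl u z : dotv (- u) z = - dotv u z.
Proof. by rewrite -scaleN1r dotvZl mulN1r. Qed.

Lemma dotvBl u v z : dotv (u - v) z = dotv u z - dotv v z.
Proof. by rewrite dotvDl dotvNl. Qed.

Lemma dotvDr u v z : dotv z (u + v) = dotv z u + dotv z v.
Proof. by rewrite dotvC dotvDl !(dotvC z). Qed.

Lemma dotvZr a u z : dotv z (a *: u) = a * dotv z u.
Proof. by rewrite dotvC dotvZl dotvC. Qed.

Lemma dotvNr u z : dotv z (- u) = - dotv z u.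
Proof. by rewrite dotvC dotvNl dotvC. Qed.

Lemma sqnorm_ge0 u : 0 <= sqnorm u.
Proof. by apply: sumr_ge0 => j _; rewrite -expr2 sqr_ge0. Qed.

Lemma sqnormN u : sqnorm (- u) = sqnorm u.
Proof. by rewrite /sqnorm dotvNl dotvNr opprK. Qed.

Lemma sqnormBC u v : sqnorm (u - v) = sqnorm (v - u).
Proof. by rewrite -sqnormN opprB. Qed.

Lemma sqnormD u v : sqnorm (u + v) = sqnorm u + 2 * dotv u v + sqnorm v.
Proof. rewrite /sqnorm dotvDl !dotvDr (dotvC v u); ring. Qed.

Lemma sqnormB u v : sqnorm (u - v) = sqnorm u - 2 * dotv u v + sqnorm v.
Proof. rewrite sqnormD sqnormN dotvNr; ring. Qed.

Lemma sqnormZ a u : sqnorm (a *: u) = a ^+ 2 * sqnorm u.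
Proof. rewrite /sqnorm dotvZl dotvZr; ring. Qed.

Lemma sqnormB_le u v : sqnorm (u - v) <= 2 * sqnorm u + 2 * sqnorm v.
Proof. have := sqnorm_ge0 (u + v); rewrite sqnormD sqnormB; lra. Qed.

Lemma dotv_young u v b : 0 < b -> 2 * dotv u v <= b * sqnorm u + sqnorm v / b.
Proof.
move=> b_gt0; rewrite -subr_ge0 -(pmulr_rge0 _ b_gt0).
have -> : b * (b * sqnorm u + sqnorm v / b - 2 * dotv u v) = sqnorm (b *: u - v).
  by rewrite sqnormB sqnormZ dotvZl; field; rewrite gt_eqF.
exact: sqnorm_ge0.
Qed.

Lemma dotv_perturb_ge (M b : R) u v x :
  sqnorm u <= M -> sqnorm v <= M -> 0 < b ->
  dotv u x - (2 * b * M + sqnorm x / (2 * b)) <= dotv v x.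
Proof.
move=> uM vM b_gt0; have := dotv_young (u - v) x b_gt0.
have := sqnormB_le u v; rewrite dotvBl.
have -> : sqnorm x / (2 * b) = sqnorm x / b / 2 by field; rewrite gt_eqF.
nra.
Qed.

End InnerProduct.

Section Convexity.
Variables (R : realType) (D : nat).
Implicit Types (v w x z : 'rV[R]_D) (h : 'rV[R]_D -> R) (W : 'rV[R]_D -> Prop).

Lemma convex_combBr (l : R) z w : l *: z + (1 - l) *: w - w = l *: (z - w).
Proof. by rewrite scalerBl scale1r scalerBr addrA addrAC addrK. Qed.

Lemma strongly_convex_subgrad (mu : R) h w v :
  strongly_convex mu h -> is_subgrad h w v ->
  forall z, h w + dotv v (z - w) + mu / 2 * sqnorm (z - w) <= h z.
Proof.
move=> h_sc v_sg z; set d := sqnorm (z - w).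
apply: (@ler_of_le_addM01 _ _ _ (mu / 2 * d)) => l /andP[l_gt0 l_le1].
have lower := v_sg (l *: z + (1 - l) *: w).
rewrite convex_combBr dotvZr in lower.
have upper := h_sc z w l; rewrite ltW //= l_le1 -/d in upper; have {}upper := upper isT.
rewrite -(ler_pM2l l_gt0); lra.
Qed.

Lemma strongly_convex_sum (n : nat) (mu : R) (F : 'I_n -> 'rV[R]_D -> R) :
  (forall i, strongly_convex mu (F i)) ->
  strongly_convex (n%:R * mu) (fun w => \sum_(i < n) F i w).
Proof.
move=> F_sc x y l l01; apply: le_trans (ler_sum _ (fun i _ => F_sc i x y l l01)) _.
rewrite !sumrB big_split /= -!mulr_sumr sumr_const card_ord.
by rewrite -[_ *+ n]mulr_natl le_eqVlt; apply/orP; left; apply/eqP; ring.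
Qed.

Lemma strongly_convex_min_gap (mu : R) W h z :
  convex_set W -> strongly_convex mu h -> W z -> (forall w, W w -> h z <= h w) ->
  forall w, W w -> mu / 2 * sqnorm (w - z) <= h w - h z.
Proof.
move=> W_cvx h_sc Wz z_min w Ww; set d := sqnorm (w - z).
apply: (@ler_of_le_addM01 _ _ _ (mu / 2 * d)) => l /andP[l_gt0 l_le1].
have := z_min _ (W_cvx _ _ l Ww Wz _); rewrite ltW //= l_le1 => /(_ isT) z_le.
have := h_sc w z l; rewrite ltW //= l_le1 -/d => /(_ isT) conv.
rewrite -(ler_pM2l l_gt0); nra.
Qed.

Lemma proj_sqdist_le W p x z :
  convex_set W -> is_proj W p -> W z -> sqnorm (p x - z) <= sqnorm (x - z).
Proof.
move=> W_cvx p_proj Wz; have [Wpx px_min] := p_proj x; set y := p x in Wpx px_min *.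
have obtuse : dotv (x - y) (z - y) <= 0.
  apply: (@ler_of_le_addM01 _ _ _ (sqnorm (z - y) / 2)) => l /andP[l_gt0 l_le1].
  have := px_min _ (W_cvx _ _ l Wz Wpx _); rewrite ltW //= l_le1 => /(_ isT).
  have -> : x - (l *: z + (1 - l) *: y) = (x - y) - l *: (z - y).
    by rewrite -convex_combBr opprB addrA subrK.
  rewrite [sqnorm (_ - l *: _)]sqnormB sqnormZ dotvZr add0r => px_le.
  rewrite -(ler_pM2l l_gt0); lra.
have -> : x - z = (x - y) - (z - y) by rewrite opprB addrA subrK.
rewrite sqnormBC [sqnorm (_ - (z - y))]sqnormB; have := sqnorm_ge0 (x - y); lra.
Qed.

Lemma proj_step_sqdist W p (M gm : R) w z v :
  convex_set W -> is_proj W p -> W z -> sqnorm v <= M ->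
  sqnorm (p (w - gm *: v) - z) <= sqnorm (w - z) + gm ^+ 2 * M - 2 * gm * dotv v (w - z).
Proof.
move=> W_cvx p_proj Wz vM; apply: le_trans (proj_sqdist_le _ W_cvx p_proj Wz) _.
rewrite [w - _ - z]addrAC [sqnorm (_ - gm *: v)]sqnormB sqnormZ dotvZr dotvC.
have := ler_wpM2l (sqr_ge0 gm) vM; lra.
Qed.

End Convexity.

Section FiniteMax.
Variables (R : realType) (Y : finType).
Implicit Types (F : Y -> R) (y : Y).

Lemma fmax_ub F y : F y <= fmax F.
Proof. by rewrite /fmax; case: pickP => [y0 _|/(_ y)//]; exact: le_bigmax. Qed.

Lemma fmax_argmax F y : [forall y', F y' <= F y] -> fmax F = F y.
Proof.
move/forallP=> Fy_max; apply/le_anti; rewrite fmax_ub andbT /fmax.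
case: pickP => [y0 _|/(_ y)//]; apply: bigmax_le => [|y' _]; exact: Fy_max.
Qed.

Lemma exists_argmax F : (0 < #|Y|)%N -> exists y, [forall y', F y' <= F y].
Proof.
case/card_gt0P=> y0 _; exists [arg max_(y > y0) F y]%O.
by apply/forallP=> y'; case: arg_maxP => // y _; apply.
Qed.

End FiniteMax.

Lemma sum_weighted_ge (R : realType) (Y : finType) (q x : Y -> R) (P : pred Y)
    (A E p : R) :
  (forall y, 0 <= q y) -> \sum_y q y = 1 -> 1 - p <= \sum_(y | P y) q y -> 0 <= E ->
  (forall y, P y -> A <= x y) -> (forall y, A - E <= x y) ->
  A - E * p <= \sum_y q y * x y.
Proof.
move=> q_ge0 q_sum1 q_P E_ge0 x_P x_ge.
have x_lb y : A - E + (if P y then E else 0) <= x y.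
  by case: ifP => Py; rewrite ?addr0 ?subrK ?x_P ?x_ge.
apply: le_trans (ler_sum _ (fun y _ => ler_wpM2l (q_ge0 y) (x_lb y))).
rewrite (eq_bigr (fun y => (A - E) * q y + E * (if P y then q y else 0))); last first.
  by move=> y _; case: ifP => _; ring.
rewrite big_split /= -!mulr_sumr q_sum1 -big_mkcond /=.
have := ler_wpM2l E_ge0 q_P; lra.
Qed.

Section TupleSums.
Variables (V : nmodType) (T : finType).

Lemma sum_tuple0 (G : seq T -> V) : \sum_(h : 0.-tuple T) G h = G [::].
Proof. by rewrite (big_pred1 [tuple]) // => h; rewrite [h]tuple0 /= eqxx. Qed.

Lemma sum_tupleS t (G : seq T -> V) :
  \sum_(h : t.+1.-tuple T) G h = \sum_(c : T) \sum_(h : t.-tuple T) G (c :: h).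
Proof.
rewrite pair_big /= (reindex (fun p : T * t.-tuple T => [tuple of p.1 :: p.2])) //.
exists (fun h : t.+1.-tuple T => (thead h, [tuple of behead h])).
  by move=> [c h] _; congr pair; apply: val_inj.
by move=> h _; rewrite -tuple_eta.
Qed.

End TupleSums.

Section HistoryExpectation.
Variables (R : realType) (n : nat) (Y : finType) (q : seq ('I_n * Y) -> 'I_n -> Y -> R).
Implicit Types (F G : seq ('I_n * Y) -> R) (t : nat).

Definition expect t F := \sum_(h : t.-tuple ('I_n * Y)) histprob q h * F h.

Lemma expect0 F : expect 0 F = F [::].
Proof. by rewrite /expect (sum_tuple0 (fun h => histprob q h * F h)) mul1r. Qed.

Lemma expectS t F :
  expect t.+1 F =
  expect t (fun h => n%:R^-1 * \sum_(i < n) \sum_(y : Y) q h i y * F ((i, y) :: h)).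
Proof.
rewrite /expect (sum_tupleS _ (fun h => histprob q h * F h)) exchange_big; apply: eq_bigr => h _ /=.
rewrite pair_bigA !mulr_sumr; apply: eq_bigr => -[i y] _ /=; ring.
Qed.

Hypothesis q_ge0 : forall h i y, 0 <= q h i y.

Lemma histprob_ge0 h : 0 <= histprob q h.
Proof. by elim: h => //= c h IHh; rewrite !mulr_ge0 ?invr_ge0. Qed.

Lemma expect_le t F G :
  (forall h, size h = t -> F h <= G h) -> expect t F <= expect t G.
Proof.
by move=> FG; apply: ler_sum => h _; rewrite ler_wpM2l ?histprob_ge0 ?FG ?size_tuple.
Qed.

Lemma expect_ge0 t F : (forall h, 0 <= F h) -> 0 <= expect t F.
Proof. by move=> F_ge0; apply: sumr_ge0 => h _; rewrite mulr_ge0 ?histprob_ge0. Qed.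

Hypothesis n_gt0 : (0 < n)%N.
Hypothesis q_sum1 : forall h i, \sum_(y : Y) q h i y = 1.

Lemma expect1 t : expect t (fun _ => 1) = 1.
Proof.
elim: t => [|t IHt]; first exact: expect0.
rewrite expectS -[RHS]IHt; apply: eq_bigr => h _; congr (_ * _).
rewrite (eq_bigr (fun _ => 1)) => [|i _]; last first.
  by rewrite -[RHS](q_sum1 h i); apply: eq_bigr => y _; rewrite mulr1.
by rewrite sumr_const card_ord mulVf // pnatr_eq0 -lt0n.
Qed.

Lemma expect_affine t (a b : R) F :
  expect t (fun h => a * F h + b) = a * expect t F + b.
Proof.
rewrite -[b in RHS]mulr1 -(expect1 t) /expect mulr_sumr !mulr_sumr -big_split /=.
by apply: eq_bigr => h _; ring.
Qed.

End HistoryExpectation.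

Lemma sgd_rate_step (R : realType) (e s C a : R) :
  1 <= e -> e <= s -> 0 <= C -> 0 <= a -> a <= 4 * C / s ->
  (1 - 2 * e / s + 1 / (4 * s)) * a + 2 * C / s ^+ 2 <= 4 * C / (s + 1).
Proof.
move=> e_ge1 e_le_s C_ge0 a_ge0 a_le; set k := 1 - _ + _.
have s_gt0 : 0 < s by lra.
have s2s1_gt0 : 0 < s ^+ 2 * (s + 1) by rewrite mulr_gt0 ?exprn_gt0 // ltr_wpDr.
rewrite -subr_ge0; have [k_ge0 | k_lt0] := lerP 0 k.
  apply: le_trans (_ : 0 <= 4 * C / (s + 1) - (k * (4 * C / s) + 2 * C / s ^+ 2)) _.
    have -> : 4 * C / (s + 1) - (k * (4 * C / s) + 2 * C / s ^+ 2) =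
        C * (8 * e * s + 8 * e - 7 * s - 3) / (s ^+ 2 * (s + 1)).
      by rewrite /k; field; rewrite !gt_eqF // ltr_wpDr.
    rewrite divr_ge0 ?mulr_ge0 ?(ltW s2s1_gt0) //; nra.
  by rewrite lerD2l lerN2 lerD2r ler_wpM2l.
apply: le_trans (_ : 0 <= 4 * C / (s + 1) - 2 * C / s ^+ 2) _.
  have -> : 4 * C / (s + 1) - 2 * C / s ^+ 2 = C * (4 * s * s - 2 * s - 2) / (s ^+ 2 * (s + 1)).
    by field; rewrite !gt_eqF // ltr_wpDr.
  rewrite divr_ge0 ?mulr_ge0 ?(ltW s2s1_gt0) //; nra.
by rewrite lerD2l lerN2 gerDr nmulr_rle0.
Qed.

Lemma sgd_recurrence (R : realType) (eta : nat) (C : R) (a : nat -> R) :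
  (0 < eta)%N -> 0 <= C -> (forall t, 0 <= a t) -> a 0%N <= 4 * C / eta%:R ->
  (forall t, a t.+1 <= (1 - 2 * eta%:R / (t + eta)%:R + 1 / (4 * (t + eta)%:R)) * a t
                       + 2 * C / (t + eta)%:R ^+ 2) ->
  forall t, a t <= 4 * C / (t + eta)%:R.
Proof.
move=> eta_gt0 C_ge0 a_ge0 a0_le a_succ; elim=> [|t IHt]; first by rewrite add0n.
apply: le_trans (a_succ t) _; rewrite addSn -[(t + eta).+1%:R]natr1.
by apply: sgd_rate_step; rewrite ?ler1n ?ler_nat ?leq_addl.
Qed.

Section ASubSGDP.
Variables (R : realType) (D n : nat) (Y : finType) (W : 'rV[R]_D -> Prop).
Variables (f : 'I_n -> Y -> 'rV[R]_D -> R) (r : 'rV[R]_D -> R) (mu M : R).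
Variables (wstar winit : 'rV[R]_D) (eta : nat) (proj : 'rV[R]_D -> 'rV[R]_D).
Variables (q : seq ('I_n * Y) -> 'I_n -> Y -> R).
Variables (sg : seq ('I_n * Y) -> 'I_n -> Y -> 'rV[R]_D -> 'rV[R]_D).

Definition reg_max_loss i w := r w + fmax (fun y => f i y w).
Local Notation g := reg_max_loss.

Hypotheses (n_gt0 : (0 < n)%N) (Y_gt0 : (0 < #|Y|)%N).
Hypotheses (W_convex : convex_set W) (mu_gt0 : 0 < mu).
Hypothesis g_sconvex : forall i, strongly_convex mu (g i).
Hypothesis subgrad_exists :
  forall i y w, exists v, is_subgrad (fun z => r z + f i y z) w v.
Hypothesis subgrad_bounded : forall i y w v,
  W w -> is_subgrad (fun z => r z + f i y z) w v -> sqnorm v <= M.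
Hypotheses (W_winit : W winit) (W_wstar : W wstar).
Hypothesis wstar_min : forall w, W w ->
  n%:R^-1 * \sum_(i < n) g i wstar <= n%:R^-1 * \sum_(i < n) g i w.

Lemma subgrad_g_of_argmax i y w v :
  [forall y', f i y' w <= f i y w] ->
  is_subgrad (fun z => r z + f i y z) w v -> is_subgrad (g i) w v.
Proof.
move=> y_max v_sg z; rewrite /reg_max_loss (fmax_argmax y_max).
by apply: le_trans (v_sg z) _; rewrite lerD2l fmax_ub.
Qed.

Lemma exists_bounded_subgrad_g i w :
  W w -> exists2 v, is_subgrad (g i) w v & sqnorm v <= M.
Proof.
move=> Ww; have [y y_max] := exists_argmax (fun y => f i y w) Y_gt0.
have [v v_sg] := subgrad_exists i y w.
by exists v; [exact: subgrad_g_of_argmax v_sg | exact: subgrad_bounded v_sg].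
Qed.

Lemma M_ge0 : 0 <= M.
Proof.
have [v _ vM] := exists_bounded_subgrad_g (Ordinal n_gt0) W_winit.
exact: le_trans (sqnorm_ge0 v) vM.
Qed.

Lemma gap_le_dotv i w v : is_subgrad (g i) w v ->
  g i w - g i wstar + mu / 2 * sqnorm (w - wstar) <= dotv v (w - wstar).
Proof.
move=> v_sg; have := strongly_convex_subgrad (g_sconvex i) v_sg wstar.
rewrite sqnormBC -opprB dotvNr; lra.
Qed.

Lemma sqdist_wstar_le w : W w -> sqnorm (w - wstar) <= 4 * M / mu ^+ 2.
Proof.
move=> Ww; set d := sqnorm (w - wstar).
have [v v_sg vM] := exists_bounded_subgrad_g (Ordinal n_gt0) Ww.
have [s s_sg sM] := exists_bounded_subgrad_g (Ordinal n_gt0) W_wstar.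
have mu_inv_gt0 : 0 < mu^-1 by rewrite invr_gt0.
have mu_d_le : mu * d <= mu^-1 * (4 * M).
  have := gap_le_dotv v_sg; have := strongly_convex_subgrad (g_sconvex _) s_sg w.
  have := dotv_young (v - s) (w - wstar) mu_inv_gt0.
  have vs_le : sqnorm (v - s) <= 4 * M by have := sqnormB_le v s; lra.
  have := ler_wpM2l (ltW mu_inv_gt0) vs_le.
  rewrite dotvBl invrK -/d; lra.
rewrite ler_pdivlMr ?exprn_gt0 //.
have := ler_wpM2l (ltW mu_gt0) mu_d_le; rewrite mulVKf ?gt_eqF // expr2; lra.
Qed.

Lemma mean_gap_ge w : W w ->
  n%:R * mu / 2 * sqnorm (w - wstar) <= \sum_(i < n) g i w - \sum_(i < n) g i wstar.
Proof.
move=> Ww; apply: (strongly_convex_min_gap W_convex (strongly_convex_sum g_sconvex)) => //.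
by move=> z Wz; rewrite -(@ler_pM2l _ n%:R^-1) ?wstar_min ?invr_gt0 ?ltr0n.
Qed.

Hypotheses (eta_gt0 : (0 < eta)%N) (proj_W : is_proj W proj).
Hypotheses (q_ge0 : forall h i y, 0 <= q h i y) (q_sum1 : forall h i, \sum_y q h i y = 1).
Hypothesis sg_subgrad : forall h i y w, is_subgrad (fun z => r z + f i y z) w (sg h i y w).

Local Notation w_ := (iterw proj mu eta sg winit).

Hypothesis q_correct : forall h i,
  1 - pfail R eta (size h) <= \sum_(y | [forall y', f i y' (w_ h) <= f i y (w_ h)]) q h i y.

Lemma W_iterw h : W (w_ h).
Proof. by case: h => [|c h] //=; exact: (proj_W _).1. Qed.

Lemma gam_ge0 t : 0 <= gam mu eta t.
Proof. by rewrite divr_ge0 ?ler0n // mulr_ge0 ?ler0n ?ltW. Qed.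

Lemma step_sqdist_i h i b : 0 < b ->
  \sum_y q h i y * sqnorm (w_ ((i, y) :: h) - wstar) <=
  sqnorm (w_ h - wstar) + gam mu eta (size h) ^+ 2 * M
  - 2 * gam mu eta (size h) * (g i (w_ h) - g i wstar + mu / 2 * sqnorm (w_ h - wstar)
      - (2 * b * M + sqnorm (w_ h - wstar) / (2 * b)) * pfail R eta (size h)).
Proof.
move=> b_gt0; have Ww := W_iterw h; have := q_correct h i.
set w := w_ h; set d := sqnorm (w - wstar); set gm := gam mu eta (size h) => q_corr.
have [u u_sg uM] := exists_bounded_subgrad_g i Ww.
set A := g i w - g i wstar + mu / 2 * d; set E := 2 * b * M + d / (2 * b).
have E_ge0 : 0 <= E by rewrite addr_ge0 ?divr_ge0 ?mulr_ge0 ?M_ge0 ?sqnorm_ge0 ?ltW.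
have dot_lb : A - E * pfail R eta (size h) <= \sum_y q h i y * dotv (sg h i y w) (w - wstar).
  apply: (sum_weighted_ge (x := fun y => dotv (sg h i y w) (w - wstar)) _ _ q_corr E_ge0)
    => // y.
    by move=> y_max; apply/gap_le_dotv/(subgrad_g_of_argmax y_max (sg_subgrad h i y w)).
  apply: le_trans (dotv_perturb_ge _ uM (subgrad_bounded Ww (sg_subgrad h i y w)) b_gt0).
  by rewrite lerD2r gap_le_dotv.
have step_y y : sqnorm (w_ ((i, y) :: h) - wstar) <=
    d + gm ^+ 2 * M - 2 * gm * dotv (sg h i y w) (w - wstar).
  exact: proj_step_sqdist W_convex proj_W W_wstar (subgrad_bounded Ww (sg_subgrad h i y w)).
apply: le_trans (ler_sum _ (fun y _ => ler_wpM2l (q_ge0 h i y) (step_y y))) _.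
rewrite (eq_bigr (fun y => (d + gm ^+ 2 * M) * q h i y
    - 2 * gm * (q h i y * dotv (sg h i y w) (w - wstar)))); last by move=> y _; ring.
rewrite sumrB -!mulr_sumr q_sum1 mulr1 lerD2l lerN2.
by apply: ler_wpM2l dot_lb; rewrite mulr_ge0 ?gam_ge0.
Qed.

Lemma step_sqdist h b : 0 < b ->
  n%:R^-1 * \sum_(i < n) \sum_y q h i y * sqnorm (w_ ((i, y) :: h) - wstar) <=
  sqnorm (w_ h - wstar) + gam mu eta (size h) ^+ 2 * M
  - 2 * gam mu eta (size h) * (mu * sqnorm (w_ h - wstar)
      - (2 * b * M + sqnorm (w_ h - wstar) / (2 * b)) * pfail R eta (size h)).
Proof.
move=> b_gt0; have := mean_gap_ge (W_iterw h); have gm_ge0 := gam_ge0 (size h).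
set w := w_ h; set d := sqnorm (w - wstar); set gm := gam mu eta (size h) in gm_ge0 *.
set Ep := (2 * b * M + d / (2 * b)) * pfail R eta (size h) => gap.
rewrite ler_pdivrMl ?ltr0n //.
apply: le_trans (ler_sum _ (fun i _ => step_sqdist_i h i b_gt0)) _; rewrite -/w -/d -/gm -/Ep.
rewrite (eq_bigr (fun i => (d + gm ^+ 2 * M - 2 * gm * (mu / 2 * d - Ep))
    - 2 * gm * (g i w - g i wstar))); last by move=> i _; ring.
rewrite sumrB sumr_const card_ord -mulr_sumr sumrB -mulr_natl.
have := ler_wpM2l (mulr_ge0 (ler0n _ 2) gm_ge0) gap; lra.
Qed.

Lemma step_sqdist_rate h :
  n%:R^-1 * \sum_(i < n) \sum_y q h i y * sqnorm (w_ ((i, y) :: h) - wstar) <=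
  (1 - 2 * eta%:R / (size h + eta)%:R + 1 / (4 * (size h + eta)%:R)) * sqnorm (w_ h - wstar)
  + 2 * ((eta%:R / mu) ^+ 2 * M) / (size h + eta)%:R ^+ 2.
Proof.
set s := (size h + eta)%:R; set u := Num.sqrt s.
have s_gt0 : 0 < s by rewrite ltr0n addn_gt0 eta_gt0 orbT.
have u_gt0 : 0 < u by rewrite sqrtr_gt0.
have b_gt0 : 0 < eta%:R / (mu * u) by rewrite divr_gt0 ?mulr_gt0 ?ltr0n.
apply: le_trans (step_sqdist h b_gt0) _; rewrite le_eqVlt; apply/orP; left; apply/eqP.
have su : s = u ^+ 2 by rewrite sqr_sqrtr // ltW.
rewrite /gam /pfail -/s -/u su.
by field; rewrite ?gt_eqF ?ltr0n.
Qed.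

Lemma expect_sqdist0_le :
  expect q 0 (fun h => sqnorm (w_ h - wstar)) <= 4 * ((eta%:R / mu) ^+ 2 * M) / eta%:R.
Proof.
rewrite expect0; apply: le_trans (sqdist_wstar_le W_winit) _.
have -> : 4 * ((eta%:R / mu) ^+ 2 * M) / eta%:R = eta%:R * (4 * M / mu ^+ 2).
  by field; rewrite ?gt_eqF ?ltr0n.
apply: ler_peMl; last by rewrite ler1n.
by apply: divr_ge0; [apply: mulr_ge0 M_ge0 | exact: sqr_ge0].
Qed.

Lemma expect_sqdist_succ_le t :
  expect q t.+1 (fun h => sqnorm (w_ h - wstar)) <=
  (1 - 2 * eta%:R / (t + eta)%:R + 1 / (4 * (t + eta)%:R)) *
    expect q t (fun h => sqnorm (w_ h - wstar))
  + 2 * ((eta%:R / mu) ^+ 2 * M) / (t + eta)%:R ^+ 2.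
Proof.
rewrite expectS -expect_affine //; apply: expect_le => // h <-.
exact: step_sqdist_rate.
Qed.

End ASubSGDP.

Unset Implicit Arguments. Set Strict Implicit.

Theorem mainTheorem13
  (R : realType) (D n : nat) (Y : finType)
  (W : 'rV[R]_D -> Prop) (f : 'I_n -> Y -> 'rV[R]_D -> R) (r : 'rV[R]_D -> R)
  (mu M : R) (w0 wstar winit : 'rV[R]_D) (eta : nat)
  (proj : 'rV[R]_D -> 'rV[R]_D)
  (q : seq ('I_n * Y) -> 'I_n -> Y -> R)
  (sg : seq ('I_n * Y) -> 'I_n -> Y -> 'rV[R]_D -> 'rV[R]_D) :
  (0 < n)%N -> (0 < #|Y|)%N ->
  convex_set W ->
  (forall i y, convex_fun (f i y)) ->
  (exists sigma : R, 0 < sigma /\ strongly_convex sigma r) ->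
  0 < mu ->
  (forall i, strongly_convex mu (fun w => r w + fmax (fun y => f i y w))) ->
  (forall i y w, exists v, is_subgrad (fun z => r z + f i y z) w v) ->
  (forall i y w v, W w -> is_subgrad (fun z => r z + f i y z) w v ->
     sqnorm v <= M) ->
  W w0 -> (forall i, r w0 + fmax (fun y => f i y w0) = 0) ->
  (* wstar = argmin over W of f = (1/n) sum_i g_i *)
  W wstar ->
  (forall w, W w ->
     (n%:R)^-1 * \sum_(i < n) (r wstar + fmax (fun y => f i y wstar))
     <= (n%:R)^-1 * \sum_(i < n) (r w + fmax (fun y => f i y w))) ->
  (0 < eta)%N ->
  is_proj W proj ->
  W winit ->
  (* the maximizer estimator: a distribution on Y (depending on the whole past)
     putting mass >= 1 - p_t on the maximizers of f_i(., w^t) *)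
  (forall h i y, 0 <= q h i y) ->
  (forall h i, \sum_(y : Y) q h i y = 1) ->
  (forall h i,
     1 - pfail R eta (size h) <=
     \sum_(y : Y | [forall y' : Y,
          f i y' (iterw proj mu eta sg winit h) <=
          f i y (iterw proj mu eta sg winit h)]) q h i y) ->
  (* subgradients used by the algorithm *)
  (forall h i y w, is_subgrad (fun z => r z + f i y z) w (sg h i y w)) ->
  forall t : nat,
    \sum_(h : t.-tuple ('I_n * Y))
       histprob q h * sqnorm (iterw proj mu eta sg winit h - wstar)
    <= 4 * (eta%:R) ^+ 2 * M / (mu ^+ 2 * (t + eta)%:R).
Proof.
move=> n_gt0 Y_gt0 W_convex _ _ mu_gt0 g_sconvex sg_exists sg_bounded _ _ W_wstar
  wstar_min eta_gt0 proj_W W_winit q_ge0 q_sum1 q_correct sg_subgrad t.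
have s_gt0 : 0 < (t + eta)%:R :> R by rewrite ltr0n addn_gt0 eta_gt0 orbT.
have -> : 4 * eta%:R ^+ 2 * M / (mu ^+ 2 * (t + eta)%:R) =
          4 * ((eta%:R / mu) ^+ 2 * M) / (t + eta)%:R.
  by rewrite expr_div_n; field; rewrite -natrD !gt_eqF.
apply: (sgd_recurrence (a := fun t => expect q t
  (fun h => sqnorm (iterw proj mu eta sg winit h - wstar)))) => //.
- by rewrite mulr_ge0 ?sqr_ge0 // (M_ge0 n_gt0 Y_gt0 sg_exists sg_bounded W_winit).
- by move=> t'; apply: expect_ge0 => // h; exact: sqnorm_ge0.
- exact: (expect_sqdist0_le proj q sg n_gt0 Y_gt0 mu_gt0 g_sconvex sg_exists sg_bounded
    W_winit W_wstar eta_gt0).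
- exact: (expect_sqdist_succ_le n_gt0 Y_gt0 W_convex mu_gt0 g_sconvex sg_exists sg_bounded
    W_winit W_wstar wstar_min eta_gt0 proj_W q_ge0 q_sum1 sg_subgrad q_correct).
Qed.
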